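(* Let $N\ge 2$ and let $y_i,r_i$ ($1\le i\le N$) be real constants with $0\le|r_1|\le|r_2|\le\dots\le|r_{N-1}|\le r_N$. For integers $j$ let $\bm{x}_j=(|y_1+jr_1|,\dots,|y_N+jr_N|)^T\in\mathbb{R}^N$ and $\tilde{\bm{x}}_j=(|y_1+jr_1|,\dots,|y_{N-1}+jr_{N-1}|)^T\in\mathbb{R}^{N-1}$. Then for all integers $j_1<j_2<\dots<j_N$, \[ \max[\bm{x}_{j_1}\ \bm{x}_{j_2}\ \dots\ \bm{x}_{j_N}]=\max\Bigl(y_N+j_Nr_N+\max[\tilde{\bm{x}}_{j_1}\ \dots\ \tilde{\bm{x}}_{j_{N-1}}],\ -y_N-j_1r_N+\max[\tilde{\bm{x}}_{j_2}\ \dots\ \tilde{\bm{x}}_{j_N}]\Bigr). \]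
   Context: Ultradiscrete permanent (UP): for a real $n\times n$ matrix $A=(a_{ij})$, $\max A\equiv\max_{\pi}\sum_{i=1}^n a_{i\pi(i)}$ over all permutations $\pi$ of $\{1,\dots,n\}$; $\max[\bm{b}_1\ \dots\ \bm{b}_n]$ denotes the UP of the matrix with columns $\bm{b}_1,\dots,\bm{b}_n$. *)

From HB Require Import structures.
From mathcomp Require Import all_boot all_order all_fingroup all_algebra.
Set Implicit Arguments. Unset Strict Implicit. Unset Printing Implicit Defensive.
Import Order.TTheory GRing.Theory Num.Theory.
Local Open Scope ring_scope.

(* The seed of the fold is the identity-permutation term, which is harmless
   since max is idempotent and the identity is among the permutations. *)
Definition upm (R : realDomainType) (n : nat) (A : 'M[R]_n) : R :=
  \big[Num.max/ (\sum_(i < n) A i i)]_(s : {perm 'I_n}) \sum_(i < n) A i (s i).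

Definition xvec (R : realDomainType) (m : nat) (y r : 'I_m -> R) (j : int)
  : 'I_m -> R := fun i => `|y i + j%:~R * r i|.

(* Expanding the ultradiscrete permanent along the last row, only the columns
   j_1 and j_N matter.  For rows i < N the entry of x_j is r_N-Lipschitz in j,
   since |r_i| <= r_N, while the last entry |y_N + j r_N| is, on the side where
   y_N + j r_N keeps its sign, the affine function ±(y_N + j r_N) of slope
   exactly r_N.  Hence moving the last row's choice to the extreme column
   (j_N if y_N + j r_N >= 0, j_1 otherwise) and letting the displaced row take
   the freed column never decreases a permutation sum. *)
From HB Require Import structures.
From mathcomp Require Import all_boot all_order all_fingroup all_algebra.
From mathcomp Require Import ring lra.
Set Implicit Arguments. Unset Strict Implicit. Unset Printing Implicit Defensive.
Import Order.TTheory GRing.Theory Num.Theory.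
Local Open Scope ring_scope.

Lemma lift_perm_onto n (s : 'S_n.+1) i : exists q : 'S_n, s = lift_perm i (s i) q.
Proof.
pose ulsf i (s : 'S_n.+1) k := odflt k (unlift (s i) (s (lift i k))).
have ulsfK i' (s' : 'S_n.+1) k : lift (s' i') (ulsf i' s' k) = s' (lift i' k).
  rewrite /ulsf; have := neq_lift i' k.
  by rewrite -(can_eq (permK s')) => /unlift_some[] ? ? ->.
have inj_ulsf : injective (ulsf i s).
  apply: can_inj (ulsf (s i) s^-1%g) _ => k'.
  by rewrite {1}/ulsf ulsfK !permK liftK.
exists (perm inj_ulsf); apply/permP => k.
case: (unliftP i k) => [k'|] ->; rewrite ?lift_perm_id //.
by rewrite lift_perm_lift permE ulsfK.
Qed.

Lemma ord_chain_homo d (T : porderType d) m k (f : 'I_m.+1 -> T) :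
  (k <= m.+1)%N -> (forall i : 'I_m.+1, (i.+1 < k)%N -> (f i <= f (inord i.+1))%O) ->
  forall a b : 'I_m.+1, (a <= b < k)%N -> (f a <= f b)%O.
Proof.
move=> km f_step a b /andP[ab bk].
have homo := @homo_leq_in _ [pred x | (x < k)%N] (fun x => f (inord x)) Order.le
  (@lexx _ T) (fun _ _ _ => @le_trans _ T _ _ _) _ _ a b.
rewrite -[a]inord_val -[b]inord_val; apply: homo => //=.
- by move=> x z xk zk y /andP[_ yz]; rewrite inE (ltn_trans yz).
- move=> x xk x1k; have xm : (x < m.+1)%N by rewrite (leq_trans _ km) // ltnW.
  by have := f_step (inord x); rewrite inordK //; apply.
- exact: leq_ltn_trans bk.
Qed.

Lemma norm_le_last_of_chain (R : realDomainType) n (r : 'I_n.+2 -> R) :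
  (forall i : 'I_n.+2, (i.+1 < n.+1)%N -> `|r i| <= `|r (inord i.+1)|) ->
  `|r (inord n)| <= r ord_max -> forall i, `|r i| <= r ord_max.
Proof.
move=> r_step r_last i; have [i_le | i_gt] := leqP i n.
  apply: le_trans r_last.
  apply: (@ord_chain_homo _ _ n.+1 n.+1 (fun i => `|r i|) (ltnW (ltnSn _)) r_step).
  by rewrite inordK // ltnSn andbT.
have -> : i = ord_max by apply/val_inj/eqP; rewrite /= eqn_leq i_gt -ltnS ltn_ord.
by rewrite ger0_norm // (le_trans _ r_last).
Qed.

Lemma dist_normr_affine_le (R : realDomainType) (y r a b rmax : R) :
  `|r| <= rmax -> `| `|y + a * r| - `|y + b * r| | <= `|a - b| * rmax.
Proof.
move=> r_le; apply: le_trans (ler_dist_dist _ _) _.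
have -> : y + a * r - (y + b * r) = (a - b) * r by ring.
by rewrite normrM ler_wpM2l.
Qed.

Lemma lift_max_widen n (i : 'I_n) : lift ord_max i = widen_ord (leqnSn n) i.
Proof. by apply: ord_inj; rewrite lift_max. Qed.

Section UltradiscretePermanent.
Variable R : realDomainType.

Lemma perm_sum_le_upm n (A : 'M[R]_n) (s : 'S_n) : \sum_i A i (s i) <= upm A.
Proof. by rewrite /upm (bigD1 s) //= le_max lexx. Qed.

Lemma upm_attained n (A : 'M[R]_n) : exists s : 'S_n, upm A = \sum_i A i (s i).
Proof.
rewrite /upm; apply: (big_ind (fun x => exists s : 'S_n, x = \sum_i A i (s i))).
- by exists 1%g; apply: eq_bigr => i _; rewrite perm1.
- move=> _ _ [s ->] [t ->].
  by case: (lerP (\sum_i A i (s i)) (\sum_i A i (t i))); [exists t | exists s].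
- by move=> s _; exists s.
Qed.

Variable n : nat.
Implicit Types (A : 'M[R]_n.+1) (c : 'I_n.+1).

Lemma sum_lift_perm_last A c (q : 'S_n) :
  \sum_i A i (lift_perm ord_max c q i)
  = A ord_max c + \sum_i row' ord_max (col' c A) i (q i).
Proof.
rewrite big_ord_recr /= lift_perm_id addrC; congr (_ + _).
by apply: eq_bigr => i _; rewrite !mxE -lift_max_widen lift_perm_lift.
Qed.

Lemma minor_le_upm A c : A ord_max c + upm (row' ord_max (col' c A)) <= upm A.
Proof.
have [q ->] := upm_attained (row' ord_max (col' c A)).
by rewrite -sum_lift_perm_last perm_sum_le_upm.
Qed.

Lemma sum_le_tperm_last A (s : 'S_n.+1) c :
  (forall i, i != ord_max ->
     A i c + A ord_max (s ord_max) <= A i (s ord_max) + A ord_max c) ->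
  \sum_i A i (s i) <= \sum_i A i ((s * tperm (s ord_max) c)%g i).
Proof.
move=> exchange; set k := s ord_max.
have [-> | nkc] := eqVneq k c; first by rewrite tperm1 mulg1.
set i0 := (s^-1)%g c; have si0 : s i0 = c by rewrite /i0 permKV.
have i0N : i0 != ord_max by apply: contraNneq nkc => e; rewrite /k -e si0.
rewrite (bigD1 ord_max) //= [X in _ <= X](bigD1 ord_max) //= (bigD1 i0 i0N) //=.
rewrite [\sum_(i < n.+1 | i != ord_max) _](bigD1 i0 i0N) //=.
set S := \sum_(i < n.+1 | (i != ord_max) && (i != i0)) A i (s i).
have -> : \sum_(i < n.+1 | (i != ord_max) && (i != i0)) A i ((s * tperm k c)%g i) = S.
  apply: eq_bigr => i /andP[iN ii0]; rewrite permM tpermD //.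
  - by rewrite /k (inj_eq perm_inj) eq_sym.
  - by rewrite -si0 (inj_eq perm_inj) eq_sym.
rewrite !permM si0 -/k tpermL tpermR !addrA lerD2r.
by rewrite addrC [A ord_max c + _]addrC; apply: exchange.
Qed.

Lemma perm_sum_le_minor A (f : 'I_n.+1 -> R) (s : 'S_n.+1) c :
  A ord_max (s ord_max) <= f (s ord_max) ->
  (forall i k, i != ord_max -> A i c - A i k <= f c - f k) ->
  \sum_i A i (s i) <= f c + upm (row' ord_max (col' c A)).
Proof.
move=> f_last f_dom.
pose B := \matrix_(i, k) if i == ord_max then f k else A i k.
have sum_AB : \sum_i A i (s i) <= \sum_i B i (s i).
  apply: ler_sum => i _; rewrite mxE; case: eqP => [-> // | _]; exact: lexx.
have minorB : row' ord_max (col' c B) = row' ord_max (col' c A).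
  by apply/matrixP => i k; rewrite !mxE eq_sym (negbTE (neq_lift _ _)).
apply: le_trans sum_AB _; apply: le_trans (@sum_le_tperm_last B s c _) _.
  move=> i iN; rewrite !mxE eqxx (negbTE iN).
  by have := f_dom i (s ord_max) iN; lra.
set s' := (s * tperm (s ord_max) c)%g.
have [q ->] := lift_perm_onto s' ord_max.
rewrite permM tpermL sum_lift_perm_last mxE eqxx minorB lerD2l.
exact: perm_sum_le_upm.
Qed.

(* Column c1 is the optimal choice of the last row when g >= 0 there, and c0
   when g < 0. *)
Lemma upm_norm_last_row A (g : 'I_n.+1 -> R) c1 c0 :
  (forall k, A ord_max k = `|g k|) ->
  (forall i k, i != ord_max -> A i c1 - A i k <= g c1 - g k) ->
  (forall i k, i != ord_max -> A i c0 - A i k <= g k - g c0) ->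
  upm A = Num.max (g c1 + upm (row' ord_max (col' c1 A)))
                  (- g c0 + upm (row' ord_max (col' c0 A))).
Proof.
move=> A_last dom1 dom0; apply/eqP; rewrite eq_le ge_max; apply/andP; split.
  have [s ->] := upm_attained A; rewrite le_max.
  have [g_ge0 | g_lt0] := lerP 0 (g (s ord_max)).
    by rewrite (perm_sum_le_minor _ dom1) // A_last ger0_norm.
  apply/orP; right; apply: (perm_sum_le_minor (f := fun k => - g k)).
    by rewrite A_last ltr0_norm.
  by move=> i k iN /=; rewrite opprK [- g c0 + _]addrC dom0.
apply/andP; split.
  by apply: le_trans (minor_le_upm A c1); rewrite lerD2r A_last ler_norm.
by apply: le_trans (minor_le_upm A c0); rewrite lerD2r A_last -normrN ler_norm.
Qed.

End UltradiscretePermanent.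

Theorem lemma3 (R : realFieldType) (n : nat) (y r : 'I_n.+2 -> R)
  (j : 'I_n.+2 -> int)
  (hr : forall i : 'I_n.+2, (i.+1 < n.+1)%N -> `|r i| <= `|r (inord i.+1)|)
  (hrN : `|r (inord n)| <= r ord_max)
  (hj : forall i : 'I_n.+2, (i.+1 < n.+2)%N -> j i < j (inord i.+1)) :
  upm (\matrix_(i < n.+2, k < n.+2) xvec y r (j k) i)
  = Num.max
      (y ord_max + (j ord_max)%:~R * r ord_max
        + upm (\matrix_(i < n.+1, k < n.+1)
                 xvec y r (j (widen_ord (leqnSn n.+1) k)) (widen_ord (leqnSn n.+1) i)))
      (- y ord_max - (j ord0)%:~R * r ord_max
        + upm (\matrix_(i < n.+1, k < n.+1)
                 xvec y r (j (lift ord0 k)) (widen_ord (leqnSn n.+1) i))).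
Proof.
have j_le (a b : 'I_n.+2) : (a <= b)%N -> j a <= j b.
  move=> ab; apply: (@ord_chain_homo _ _ n.+1 n.+2 j (leqnn _)).
    by move=> i hi; exact/ltW/hj.
  by rewrite ab ltn_ord.
have r_le := norm_le_last_of_chain hr hrN.
set A := \matrix_(i, k) xvec y r (j k) i.
pose g k := y ord_max + (j k)%:~R * r ord_max.
have slope i (a b : 'I_n.+2) : (b <= a)%N -> `|A i a - A i b| <= g a - g b.
  move=> ba; have jab : 0 <= (j a)%:~R - (j b)%:~R :> R by rewrite subr_ge0 ler_int j_le.
  have -> : g a - g b = ((j a)%:~R - (j b)%:~R) * r ord_max by rewrite /g; ring.
  by rewrite !mxE -(ger0_norm jab) dist_normr_affine_le.
have minor_eq (c : 'I_n.+2) (jc : 'I_n.+1 -> 'I_n.+2) : lift c =1 jc ->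
    row' ord_max (col' c A)
    = \matrix_(i, k) xvec y r (j (jc k)) (widen_ord (leqnSn n.+1) i).
  by move=> ejc; apply/matrixP => i k; rewrite !mxE ejc lift_max_widen.
rewrite -(minor_eq ord_max _ (@lift_max_widen _)) -(minor_eq ord0 _ (frefl _)).
rewrite -opprD; apply: (@upm_norm_last_row _ _ A g) => [k | i k _ | i k _].
- by rewrite mxE.
- exact: le_trans (ler_norm _) (slope i ord_max k (leq_ord k)).
- by apply: le_trans (ler_norm _) _; rewrite distrC slope.
Qed.
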